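(* There exist constants $c_1,c_2>0$ and an infinite family of graphs $G$ (with $n$ vertices and $m$ edges, $n\to\infty$) such that each $G$ in the family admits a composition-minimal clique cover $\mathcal{C}$ with $c_1 m\le|\mathcal{C}|\le c_2 m$ and $c_1 nm\le\|\mathcal{C}\|\le c_2 nm$, i.e. $|\mathcal{C}|=\Theta(m)$ but $\|\mathcal{C}\|=\Theta(nm)$.
   Context: All graphs are finite, simple, undirected, with no isolated vertices; $n=|V|$, $m=|E|$. A non-edge is an unordered pair of distinct non-adjacent vertices. A clique is a vertex set inducing a complete subgraph. $\|\mathcal{F}\|:=\sum_{F\in\mathcal{F}}|F|$ for a family of finite sets. A clique cover of $G$ is an indexed family $\{C_\ell\}_{\ell\in I}$ of cliques of $G$ such that every edge lies in at least one member; it is composition-minimal if for every two distinct indices $i\ne j$ there exist $u\in C_i$, $v\in C_j$ with $\{u,v\}$ a non-edge. *)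

From mathcomp Require Import all_boot all_order all_algebra.
Set Implicit Arguments. Unset Strict Implicit. Unset Printing Implicit Defensive.
Import Order.TTheory GRing.Theory Num.Theory.

Definition simple_graph (n : nat) (e : rel 'I_n) : Prop :=
  symmetric e /\ irreflexive e /\ (forall v : 'I_n, exists u : 'I_n, e v u).

Definition num_edges (n : nat) (e : rel 'I_n) : nat :=
  #|[set p : 'I_n * 'I_n | (p.1 < p.2)%N && e p.1 p.2]|.

Definition non_edge (n : nat) (e : rel 'I_n) (u v : 'I_n) : Prop :=
  u != v /\ ~~ e u v.

Definition is_clique (n : nat) (e : rel 'I_n) (C : {set 'I_n}) : Prop :=
  forall u v, u \in C -> v \in C -> u != v -> e u v.

Definition clique_cover (n k : nat) (e : rel 'I_n) (C : 'I_k -> {set 'I_n}) : Prop :=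
  (forall i, is_clique e (C i)) /\
  (forall u v, e u v -> exists i, u \in C i /\ v \in C i).

Definition composition_minimal (n k : nat) (e : rel 'I_n)
    (C : 'I_k -> {set 'I_n}) : Prop :=
  forall i j : 'I_k, i != j ->
    exists u v, u \in C i /\ v \in C j /\ non_edge e u v.

Definition cover_weight (n k : nat) (C : 'I_k -> {set 'I_n}) : nat :=
  \sum_(i < k) #|C i|.

From mathcomp Require Import all_boot all_order all_algebra.
From mathcomp Require Import zify lra.
Import Order.TTheory GRing.Theory Num.Theory.
Set Implicit Arguments. Unset Strict Implicit. Unset Printing Implicit Defensive.

(* The family is the cocktail-party graph on the n = 2t vertices (l, b),
   l < t, b : bool, two vertices being adjacent iff their columns l differ;
   it has m = 2t(t-1) edges.  For each 2-subset S of columns, the transversal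
   that takes the top copy exactly over S is a maximal clique of size t.  For
   t >= 4 these 'C(t, 2) = m/4 cliques cover every edge, and two distinct
   transversals differ in some column, whose two copies are a non-edge between
   them.  Hence |C| = m/4 while ||C|| = t 'C(t, 2) = nm/8. *)

Lemma card_adjacent_pairs n (e : rel 'I_n) : symmetric e -> irreflexive e ->
  #|[set p : 'I_n * 'I_n | e p.1 p.2]| = (num_edges e).*2.
Proof.
move=> e_sym e_irr.
set E := [set p | e p.1 p.2]; set L := [set p : 'I_n * 'I_n | (p.1 < p.2)%N].
have swap_inj : injective (fun p : 'I_n * 'I_n => (p.2, p.1)).
  by case=> [x1 x2] [y1 y2] [-> ->].
have E_upper : E :\: L = (fun p => (p.2, p.1)) @^-1: (E :&: L).
  apply/setP=> -[u v]; rewrite !inE /= [e v u]e_sym -leqNgt andbC.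
  rewrite leq_eqVlt; case: eqP => [/val_inj->|_]; first by rewrite e_irr.
  by case: (e u v).
rewrite /num_edges -(cardsID L E) E_upper card_preimset // -addnn.
by congr (_ + _); apply: eq_card => p; rewrite !inE andbC.
Qed.

Lemma degree_sum n (e : rel 'I_n) :
  \sum_u #|[set v | e u v]| = #|[set p : 'I_n * 'I_n | e p.1 p.2]|.
Proof.
rewrite -sum1_card (eq_bigl (fun p => e p.1 p.2)) => [|p]; last by rewrite inE.
rewrite -(pair_big_dep xpredT e (fun _ _ => 1)).
by apply: eq_bigr => u _; rewrite -sum1_card; apply: eq_bigl => v; rewrite inE.
Qed.

Lemma subset_card_between (T : finType) (A B : {set T}) k :
  A \subset B -> (#|A| <= k <= #|B|)%N ->
  exists S : {set T}, [/\ A \subset S, S \subset B & #|S| = k].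
Proof.
move=> + /andP[]; elim: k A => [|k IHk] A sAB.
  by rewrite leqn0 cards_eq0 => /eqP-> _; exists set0; rewrite !sub0set cards0.
rewrite leq_eqVlt => /orP[/eqP<- _|leAk ltkB]; first by exists A.
have [S [sAS sSB cardS]] := IHk A sAB leAk (ltnW ltkB).
have [x /setDP[Bx Sx]] : exists x, x \in B :\: S.
  by apply/set0Pn; rewrite -card_gt0 cardsD (setIidPr sSB) cardS subn_gt0.
exists (x |: S); rewrite subUset sub1set Bx sSB cardsU1 Sx cardS.
by rewrite (subset_trans sAS (subsetUr _ _)).
Qed.

Lemma exists_pair_set_prescribed (T : finType) (a c : T) (x y : bool) :
  a != c -> 3 < #|T| ->
  exists S : {set T}, [/\ #|S| = 2, (a \in S) = x & (c \in S) = y].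
Proof.
move=> ac T_gt3.
set A := [set l | (l == a) && x || (l == c) && y].
set B := [set l | ((l == a) ==> x) && ((l == c) ==> y)].
have sAB : A \subset B.
  apply/subsetP=> l; rewrite !inE.
  have [-> | _] := eqVneq l a; first by rewrite (negbTE ac) orbF andbT.
  by case: (l == c).
have leA2 : #|A| <= 2.
  have sA : A \subset [set a; c].
    by apply/subsetP=> l; rewrite !inE => /orP[]/andP[->]; rewrite ?orbT.
  by rewrite (leq_trans (subset_leq_card sA)) // cards2 ltnS leq_b1.
have geB2 : 2 <= #|B|.
  have sCB : ~: B \subset [set a; c].
    apply/subsetP=> l; rewrite !inE; apply: contraR.
    by rewrite negb_or => /andP[/negbTE-> /negbTE->].
  have := subset_leq_card sCB; have := cardsC B; rewrite cards2; lia.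
have [S [sAS sSB cardS]] := subset_card_between sAB (introT andP (conj leA2 geB2)).
have inA l : l \in A -> l \in S := subsetP sAS l.
have inB l : l \in S -> l \in B := subsetP sSB l.
exists S; split=> //; apply/idP/idP.
- by move/inB; rewrite inE eqxx => /andP[].
- by move=> xa; apply: inA; rewrite inE eqxx xa.
- by move/inB; rewrite inE eqxx => /andP[_].
by move=> yc; apply: inA; rewrite inE eqxx yc orbT.
Qed.

Section CompleteMultipartite.

Variables (n : nat) (rT : eqType) (part : 'I_n -> rT).

Definition multipartite : rel 'I_n := fun u v => part u != part v.

Lemma multipartite_simple a b : part a != part b -> simple_graph multipartite.
Proof.
move=> ab; split; [|split] => [u v|u|v]; rewrite /multipartite ?eqxx ?(eq_sym (part u)) //.
have [va|] := eqVneq (part v) (part a); last by exists a.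
by exists b; rewrite va.
Qed.

Lemma multipartite_degree u :
  #|[set v | multipartite u v]| = n - #|[set v | part v == part u]|.
Proof.
rewrite -[n in n - _]card_ord -(cardsC [set v | part v == part u]) addKn.
by apply: eq_card => v; rewrite !inE eq_sym.
Qed.

Definition transversal (C : {set 'I_n}) : Prop :=
  is_clique multipartite C /\ forall u, exists2 v, v \in C & part v = part u.

Lemma transversal_non_edge C u : transversal C -> u \notin C ->
  exists2 v, v \in C & non_edge multipartite v u.
Proof.
move=> [_ meetC] uNC; have [v vC vu] := meetC u; exists v => //.
by split; [apply: contraNneq uNC => <- | rewrite /multipartite vu negbK].
Qed.

Lemma transversals_composition_minimal k (C : 'I_k -> {set 'I_n}) :
  injective C -> (forall i, transversal (C i)) -> composition_minimal multipartite C.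
Proof.
move=> C_inj C_tr i j; rewrite -(inj_eq C_inj) eqEsubset negb_and.
case/orP=> /subsetPn[u uC uNC].
- have [v vC [vu euv]] := transversal_non_edge (C_tr j) uNC.
  by exists u, v; split; rewrite // /non_edge /multipartite eq_sym (eq_sym (part u)).
- have [v vC vu] := transversal_non_edge (C_tr i) uNC.
  by exists v, u.
Qed.

End CompleteMultipartite.

Lemma card_set_enum_val (T : finType) (P : pred T) :
  #|[set u : 'I_#|T| | P (enum_val u)]| = #|[set x | P x]|.
Proof.
rewrite -(on_card_preimset (onW_bij _ (enum_val_bij T))).
by apply: eq_card => u; rewrite !inE.
Qed.

Section CocktailParty.

Variable t : nat.

Local Notation vertex := 'I_#|{: 'I_t * bool}|.

Definition column (u : vertex) : 'I_t := (enum_val u).1.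

Local Notation cocktail := (multipartite column).

Definition clique_of (S : {set 'I_t}) : {set vertex} :=
  [set u | (enum_val u).2 == ((enum_val u).1 \in S)].

Lemma card_column_fiber u : #|[set v | column v == column u]| = 2.
Proof.
rewrite (card_set_enum_val (fun x => x.1 == column u)).
have -> : [set x | x.1 == column u] = setX [set column u] [set: bool].
  by apply/setP=> -[l b]; rewrite !inE andbT.
by rewrite cardsX cards1 cardsT card_bool.
Qed.

Lemma num_edges_cocktail : num_edges cocktail = 4 * 'C(t, 2).
Proof.
apply/eqP; rewrite -(eqn_pmul2l (isT : 0 < 2)) mul2n -card_adjacent_pairs //.
- rewrite -degree_sum (eq_bigr (fun=> #|{: 'I_t * bool}| - 2)) => [|u _].
    have bin2E : 2 * 'C(t, 2) = t * (t - 1) by rewrite mul_bin_left bin1 mulnC.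
    rewrite sum_nat_const card_ord card_prod card_ord card_bool; nia.
  by rewrite multipartite_degree card_column_fiber.
- by move=> u v; rewrite /multipartite eq_sym.
- by move=> u; rewrite /multipartite eqxx.
Qed.

Lemma clique_of_transversal S : transversal column (clique_of S).
Proof.
split=> [u v|u].
  rewrite !inE => /eqP Su /eqP Sv; apply: contra_neq => uv.
  apply: enum_val_inj; move: Su Sv; rewrite /column in uv.
  by case: (enum_val u) uv => l b; case: (enum_val v) => l' b' /= <- -> ->.
exists (enum_rank (column u, column u \in S)).
  by rewrite inE enum_rankK.
by rewrite /column enum_rankK.
Qed.

Lemma card_clique_of S : #|clique_of S| = t.
Proof.
rewrite (card_set_enum_val (fun x => x.2 == (x.1 \in S))).
have graph_inj : injective (fun l : 'I_t => (l, l \in S)) by move=> ? ? [].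
rewrite -[t in RHS]card_ord -(card_imset _ graph_inj).
apply: eq_card => -[l b]; rewrite inE /=.
by apply/idP/imsetP => [/eqP->|[l' _ [-> ->]]]; first exists l.
Qed.

Lemma clique_of_inj : injective clique_of.
Proof.
move=> S S' eqSS'; apply/setP=> l.
move/setP/(_ (enum_rank (l, true) : vertex)): eqSS'.
by rewrite /= !inE enum_rankK /= !(eq_sym true) !eqb_id.
Qed.

Lemma cocktail_edge_covered u v : 3 < t -> cocktail u v ->
  exists S : {set 'I_t}, [/\ #|S| = 2, u \in clique_of S & v \in clique_of S].
Proof.
move=> t_gt3 uv; rewrite -[t]card_ord in t_gt3.
have [S [cardS Su Sv]] := exists_pair_set_prescribed (enum_val u).2 (enum_val v).2 uv t_gt3.
by exists S; rewrite !inE Su Sv !eqxx.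
Qed.

Lemma cocktail_pair_cover : 3 < t ->
  exists k (C : 'I_k -> {set vertex}),
    [/\ clique_cover cocktail C, composition_minimal cocktail C,
        4 * k = num_edges cocktail
      & 8 * cover_weight C = #|{: 'I_t * bool}| * num_edges cocktail].
Proof.
move=> t_gt3; set pairs := [set S : {set 'I_t} | #|S| == 2].
have card_pairs : #|pairs| = 'C(t, 2) by rewrite card_draws card_ord.
exists #|pairs|, (fun i => clique_of (enum_val i)); split.
- split=> [i|u v /(cocktail_edge_covered t_gt3)[S [cardS Su Sv]]].
    exact: (clique_of_transversal _).1.
  have pairsS : S \in pairs by rewrite inE cardS.
  by exists (enum_rank_in pairsS S); rewrite enum_rankK_in.
- apply: transversals_composition_minimal => [i j /clique_of_inj/enum_val_inj //|i].
  exact: clique_of_transversal.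
- by rewrite num_edges_cocktail card_pairs.
rewrite num_edges_cocktail /cover_weight.
rewrite (eq_bigr (fun=> t)) => [|i _]; last exact: card_clique_of.
by rewrite sum_nat_const card_ord card_pairs card_prod card_ord card_bool; lia.
Qed.

End CocktailParty.

Local Open Scope ring_scope.

Theorem mainTheorem9 :
  exists c1 c2 : rat, 0 < c1 /\ 0 < c2 /\
    forall N : nat, exists (n : nat) (e : rel 'I_n),
      (N <= n)%N /\ simple_graph e /\
      exists (k : nat) (C : 'I_k -> {set 'I_n}),
        clique_cover e C /\ composition_minimal e C /\
        c1 * (num_edges e)%:R <= k%:R /\ k%:R <= c2 * (num_edges e)%:R /\
        c1 * (n * num_edges e)%:R <= (cover_weight C)%:R /\
        (cover_weight C)%:R <= c2 * (n * num_edges e)%:R.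
Proof.
exists (1 / 8), (1 / 4); do 2!split=> //; move=> N.
exists #|{: 'I_N.+4 * bool}|, (multipartite (@column N.+4)); split.
  by rewrite card_prod card_ord card_bool; lia.
split.
  apply: (multipartite_simple (a := enum_rank (ord0, true)) (b := enum_rank (ord_max, true))).
  by rewrite /column !enum_rankK.
have [k [C [cover minimal k_edges weight_edges]]] := @cocktail_pair_cover N.+4 isT.
exists k, C; do 2!split=> //.
set m := num_edges _ in k_edges weight_edges *.
have -> : m%:R = 4 * k%:R :> rat by rewrite -k_edges natrM.
have -> : (#|{: 'I_N.+4 * bool}| * m)%:R = 8 * (cover_weight C)%:R :> rat.
  by rewrite -weight_edges natrM.
have k_ge0 : 0 <= k%:R :> rat by [].
have w_ge0 : 0 <= (cover_weight C)%:R :> rat by [].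
lra.
Qed.
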